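(* For all feasible $\boldsymbol\lambda\ne0$ with $\boldsymbol\lambda\succeq0$, we have $M(\boldsymbol\lambda)\succ0$ and $M(\boldsymbol\lambda)\succeq\boldsymbol\lambda$. Similarly, for all feasible $\boldsymbol\lambda\ne0$ with $\boldsymbol\lambda\preceq0$, we have $M(\boldsymbol\lambda)\prec0$ and $M(\boldsymbol\lambda)\preceq\boldsymbol\lambda$.
   Context: Setting: a mixture of two Bernoullis on $\{0,1\}^D$. - The true distribution is $p^*=\pi_1^*B(\cdot\mid\boldsymbol\mu_1^* )+\pi_2^*B(\cdot\mid\boldsymbol\mu_2^* )$, where $B(\mathbf x\mid\boldsymbol\mu)=\prod_i\mu_i^{x_i}(1-\mu_i)^{1-x_i}$, $\pi_1^*\in(0,1)$ and $\pi_2^*=1-\pi_1^*$. Notation: - $\overline{\mathbf x}=\mathbb E_{p^*}[\mathbf x]$, $S_i=\overline x_i(1-\overline x_i)$ and $\boldsymbol\mu^*=(\boldsymbol\mu_1^*-\boldsymbol\mu_2^* )/2$. - For $\boldsymbol\mu_1\in[0,1]^D$, set $\mathbf b=\boldsymbol\mu_1-\overline{\mathbf x}$ and $\lambda_i=2S_i^{-1}\mu_i^*b_i$. Feasible $\boldsymbol\lambda$ are those arising from $\boldsymbol\mu_1\in[0,1]^D$. - $Z_1(\boldsymbol\lambda)=\pi_1^*\prod_i(1+\pi_2^*\lambda_i)+\pi_2^*\prod_i(1-\pi_1^*\lambda_i)$. - $B_{1i}=\prod_{j\ne i}(1+\pi_2^*\lambda_j)$, $B_{2i}=\prod_{j\ne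 i}(1-\pi_1^*\lambda_j)$, and $\Lambda_i=\mu_{1i}(1-\mu_{1i})$. The leading-order EM update of $\boldsymbol\lambda$ in the one-cluster regime ($\pi_1$ small, $\boldsymbol\mu_2=\overline{\mathbf x}$) is $$M(\boldsymbol\lambda)_i=\lambda_i+(2S_i^{-1}\mu_i^* )^2\pi_1^*\pi_2^*\frac{\Lambda_i}{Z_1(\boldsymbol\lambda)}(B_{1i}-B_{2i}).$$ $\succeq$/$\succ$ denote non-strict/strict componentwise order. Standing assumption: $4\pi_1^*\pi_2^*\mu_i^*\mu_j^*\ne0$ for all $i\ne j$. *)

From HB Require Import structures.
From mathcomp Require Import all_boot all_order all_algebra.
Set Implicit Arguments. Unset Strict Implicit. Unset Printing Implicit Defensive.
Import Order.TTheory GRing.Theory Num.Theory.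
Local Open Scope ring_scope.

Section BernMix.
Variables (R : realFieldType) (D : nat).
(* pi1 = pi_1star, pi2 = 1 - pi1; m1, m2 = mu_1star, mu_2star *)
Variables (pi1 : R) (m1 m2 : 'I_D -> R).

Definition pi2 : R := 1 - pi1.

(* xbar = expectation of x under the true mixture *)
Definition xbar (i : 'I_D) : R := pi1 * m1 i + pi2 * m2 i.
Definition Svar (i : 'I_D) : R := xbar i * (1 - xbar i).
Definition mustar (i : 'I_D) : R := (m1 i - m2 i) / 2.

Definition lam_of (mu1 : 'I_D -> R) (i : 'I_D) : R :=
  2 * (Svar i)^-1 * mustar i * (mu1 i - xbar i).

Definition Z1 (lam : 'I_D -> R) : R :=
  pi1 * \prod_(j < D) (1 + pi2 * lam j) + pi2 * \prod_(j < D) (1 - pi1 * lam j).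

Definition B1 (lam : 'I_D -> R) (i : 'I_D) : R :=
  \prod_(j < D | j != i) (1 + pi2 * lam j).
Definition B2 (lam : 'I_D -> R) (i : 'I_D) : R :=
  \prod_(j < D | j != i) (1 - pi1 * lam j).

Definition Lam (mu1 : 'I_D -> R) (i : 'I_D) : R := mu1 i * (1 - mu1 i).

(* The leading-order EM update M(lambda); Lambda is computed from the mu1
   that gives rise to lambda. *)
Definition Mupd (mu1 : 'I_D -> R) (lam : 'I_D -> R) (i : 'I_D) : R :=
  lam i + (2 * (Svar i)^-1 * mustar i) ^+ 2 * pi1 * pi2
          * (Lam mu1 i / Z1 lam) * (B1 lam i - B2 lam i).

End BernMix.

(** If [lambda >= 0], every factor [1 + pi2 lambda_j] is at least 1 and every
    factor [1 - pi1 lambda_j] lies in [[0, 1]] (feasibility), so [B1 >= 1 >= B2]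
    and the EM increment is nonnegative.  At a coordinate with [lambda_i = 0]
    some other [lambda_k > 0] makes [B1 > 1], and the standing assumption forces
    [mustar_i != 0], hence [mu_1i = xbar_i] and [Lambda_i = S_i > 0]: the
    increment is strictly positive.  The case [lambda <= 0] reduces to this one
    by the relabelling [(pi1, m1, m2) -> (pi2, m2, m1)], which negates both
    [lambda] and [M(lambda)]. *)

From HB Require Import structures.
From mathcomp Require Import all_boot all_order all_algebra.
From mathcomp Require Import ring lra.
Import Order.TTheory GRing.Theory Num.Theory.
Set Implicit Arguments. Unset Strict Implicit.
Local Open Scope ring_scope.

Lemma prodr_ege1 (R : numDomainType) (I : finType) (P : pred I) (F : I -> R) :
  (forall i, P i -> 1 <= F i) -> 1 <= \prod_(i | P i) F i.
Proof.
by move=> F_ge1; apply: (big_ind (fun x => 1 <= x)) => // x y; apply: mulr_ege1.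
Qed.

Lemma prodr_egt1 (R : numDomainType) (I : finType) (P : pred I) (F : I -> R) k :
  (forall i, P i -> 1 <= F i) -> P k -> 1 < F k -> 1 < \prod_(i | P i) F i.
Proof.
move=> F_ge1 Pk Fk_gt1; rewrite (bigD1 k) //=.
have rest_ge1 : 1 <= \prod_(i | P i && (i != k)) F i.
  by apply: prodr_ege1 => i /andP[/F_ge1].
by apply: (lt_le_trans Fk_gt1); rewrite ler_peMr // (le_trans ler01 (ltW Fk_gt1)).
Qed.

(* For [x = xbar_j], [m = mu_1j] and [b = m2 j] (resp. [m1 j]) this is
   [(1 - pi1 lambda_j) S_j] (resp. [(1 + pi2 lambda_j) S_j]). *)
Lemma bernoulli_factor_num_ge0 (R : realDomainType) (x b m : R) :
  0 <= x <= 1 -> 0 <= b <= 1 -> 0 <= m <= 1 -> 0 <= x * (1 - x) - (x - b) * (m - x).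
Proof.
move=> /andP[x_ge0 x_le1] /andP[b_ge0 b_le1] /andP[m_ge0 m_le1].
have -> : x * (1 - x) - (x - b) * (m - x) = m * b * (1 - x) + (1 - m) * x * (1 - b).
  by ring.
by rewrite addr_ge0 // !mulr_ge0 // subr_ge0.
Qed.

Lemma convex_comb01 (R : realDomainType) (p a b : R) :
  0 <= p <= 1 -> 0 <= a <= 1 -> 0 <= b <= 1 -> 0 <= p * a + (1 - p) * b <= 1.
Proof.
move=> /andP[p0 p1] /andP[a0 a1] /andP[b0 b1].
rewrite addr_ge0 ?mulr_ge0 ?subr_ge0 //=.
by rewrite -[leRHS](subrKC p) lerD ?ler_piMr ?subr_ge0.
Qed.

Lemma convex_comb_open01 (R : realDomainType) (p a b : R) :
  0 < p < 1 -> 0 <= a <= 1 -> 0 <= b <= 1 -> a != b ->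
  0 < p * a + (1 - p) * b < 1.
Proof.
move=> /andP[p0 p1] /andP[a0 a1] /andP[b0 b1].
by case: (ltgtP a b) => // ab _; apply/andP; split; nra.
Qed.

Definition em_step {R : realFieldType} {D : nat} (p : R) (lam : 'I_D -> R)
    (w : R) (i : 'I_D) : R :=
  lam i + w / Z1 p lam * (B1 p lam i - B2 p lam i).

Section NonnegativeStep.
Variables (R : realFieldType) (D : nat) (p : R) (lam : 'I_D -> R).
Hypotheses (p_gt0 : 0 < p) (p_lt1 : p < 1).
Hypotheses (lam_ge0 : forall j, 0 <= lam j) (factor_ge0 : forall j, 0 <= 1 - p * lam j).

Lemma B1_ge1 i : 1 <= B1 p lam i.
Proof. by apply: prodr_ege1 => j _; rewrite lerDl mulr_ge0 // subr_ge0 ltW. Qed.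

Lemma B2_le1 i : B2 p lam i <= 1.
Proof. by apply: prodr_ile1 => j _; rewrite factor_ge0 gerBl mulr_ge0 // ltW. Qed.

Lemma B1_gt1 i k : k != i -> 0 < lam k -> 1 < B1 p lam i.
Proof.
move=> ki lk_gt0; apply: (prodr_egt1 (k := k)) => //.
  by move=> j _; rewrite lerDl mulr_ge0 // subr_ge0 ltW.
by rewrite ltrDl mulr_gt0 ?subr_gt0.
Qed.

Lemma Z1_gt0 : 0 < Z1 p lam.
Proof.
have prod1_ge1 : 1 <= \prod_(j < D) (1 + pi2 p * lam j).
  by apply: prodr_ege1 => j _; rewrite lerDl mulr_ge0 // subr_ge0 ltW.
rewrite /Z1 ltr_wpDr ?mulr_ge0 ?prodr_ge0 ?subr_ge0 ?(ltW p_lt1) //.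
by rewrite mulr_gt0 // (lt_le_trans ltr01 prod1_ge1).
Qed.

Lemma em_step_ge w i : 0 <= w -> lam i <= em_step p lam w i.
Proof.
move=> w_ge0; rewrite /em_step lerDl mulr_ge0 ?divr_ge0 ?(ltW Z1_gt0) //.
by rewrite subr_ge0 (le_trans (B2_le1 i) (B1_ge1 i)).
Qed.

Lemma em_step_gt0 w i k :
  0 <= w -> (lam i = 0 -> 0 < w) -> 0 < lam k -> 0 < em_step p lam w i.
Proof.
move=> w_ge0 w_gt0 lk_gt0; have [li0|li_neq0] := eqVneq (lam i) 0.
  have ki : k != i by apply: contraTneq lk_gt0 => ->; rewrite li0 ltxx.
  rewrite /em_step li0 add0r mulr_gt0 ?divr_gt0 ?Z1_gt0 ?w_gt0 //.
  by rewrite subr_gt0 (le_lt_trans (B2_le1 i) (B1_gt1 ki lk_gt0)).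
by apply: lt_le_trans (em_step_ge i w_ge0); rewrite lt_def li_neq0 lam_ge0.
Qed.

End NonnegativeStep.

Section Relabelling.
Variables (R : realFieldType) (D : nat) (p : R) (lam : 'I_D -> R).

Lemma pi2K : pi2 (pi2 p) = p.
Proof. by rewrite /pi2 opprB addrC subrK. Qed.

Lemma Z1_opp : Z1 (pi2 p) (fun j => - lam j) = Z1 p lam.
Proof.
rewrite /Z1 pi2K addrC; congr (_ * _ + _ * _); apply: eq_bigr => j _.
  by rewrite mulrN opprK.
by rewrite mulrN.
Qed.

Lemma B1_opp i : B1 (pi2 p) (fun j => - lam j) i = B2 p lam i.
Proof. by rewrite /B1 pi2K; apply: eq_bigr => j _; rewrite mulrN. Qed.

Lemma B2_opp i : B2 (pi2 p) (fun j => - lam j) i = B1 p lam i.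
Proof. by apply: eq_bigr => j _; rewrite mulrN opprK. Qed.

Lemma em_step_opp w i :
  em_step (pi2 p) (fun j => - lam j) w i = - em_step p lam w i.
Proof. by rewrite /em_step Z1_opp B1_opp B2_opp opprD -mulrN opprB. Qed.

End Relabelling.

Section EMUpdate.
Variables (R : realFieldType) (D : nat) (pi1 : R) (m1 m2 mu1 : 'I_D -> R).
Hypotheses (pi1_gt0 : 0 < pi1) (pi1_lt1 : pi1 < 1).
Hypotheses (m1_01 : forall i, 0 <= m1 i <= 1) (m2_01 : forall i, 0 <= m2 i <= 1).
Hypothesis (mu1_01 : forall i, 0 <= mu1 i <= 1).
Hypothesis (standing : forall i j, i != j ->
  4 * pi1 * pi2 pi1 * mustar m1 m2 i * mustar m1 m2 j != 0).

Local Notation xbar := (xbar pi1 m1 m2).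
Local Notation Svar := (Svar pi1 m1 m2).
Local Notation mustar := (mustar m1 m2).
Local Notation lam := (lam_of pi1 m1 m2 mu1).
Local Notation M := (Mupd pi1 m1 m2 mu1 lam).

Definition em_weight i : R :=
  (2 * (Svar i)^-1 * mustar i) ^+ 2 * pi1 * pi2 pi1 * Lam mu1 i.

Lemma MupdE i : Mupd pi1 m1 m2 mu1 lam i = em_step pi1 lam (em_weight i) i.
Proof. by rewrite /Mupd /em_step /em_weight !mulrA. Qed.

Lemma lam_ofE j : lam j = (m1 j - m2 j) * (mu1 j - xbar j) / Svar j.
Proof. by rewrite /lam_of /mustar; move: (Svar j)^-1 => s; field. Qed.

Lemma xbar_01 j : 0 <= xbar j <= 1.
Proof. by apply: convex_comb01; rewrite ?(ltW pi1_gt0) ?(ltW pi1_lt1). Qed.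

Lemma Svar_ge0 j : 0 <= Svar j.
Proof. by have /andP[x0 x1] := xbar_01 j; rewrite mulr_ge0 // subr_ge0. Qed.

Lemma lam_mulSvar j :
  Svar j != 0 -> lam j * Svar j = (m1 j - m2 j) * (mu1 j - xbar j).
Proof. by move=> S_neq0; rewrite lam_ofE divfK. Qed.

Lemma lam_factors_ge0 j : 0 <= 1 - pi1 * lam j /\ 0 <= 1 + pi2 pi1 * lam j.
Proof.
have [S0|S_neq0] := eqVneq (Svar j) 0.
  (* [S_j = 0] forces [lambda_j = 0] through [0^-1 = 0]. *)
  by rewrite lam_ofE S0 invr0 !mulr0 subr0 addr0.
have S_gt0 : 0 < Svar j by rewrite lt_def S_neq0 Svar_ge0.
have shift1 : pi1 * (m1 j - m2 j) = xbar j - m2 j by rewrite /xbar /pi2; ring.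
have shift2 : pi2 pi1 * (m1 j - m2 j) = - (xbar j - m1 j) by rewrite /xbar /pi2; ring.
have lamS := lam_mulSvar S_neq0.
split.
  rewrite -(pmulr_lge0 _ S_gt0) mulrBl mul1r -mulrA lamS mulrA shift1.
  by apply: bernoulli_factor_num_ge0 => //; apply: xbar_01.
rewrite -(pmulr_lge0 _ S_gt0) mulrDl mul1r -mulrA lamS mulrA shift2 mulNr.
by apply: bernoulli_factor_num_ge0 => //; apply: xbar_01.
Qed.

Lemma xbar_in_open01 i : m1 i != m2 i -> 0 < xbar i < 1.
Proof. by apply: convex_comb_open01; rewrite ?pi1_gt0. Qed.

Lemma em_weight_ge0 i : 0 <= em_weight i.
Proof.
have /andP[mu_ge0 mu_le1] := mu1_01 i.
have pi2_ge0 : 0 <= pi2 pi1 by rewrite subr_ge0 ltW.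
have Lam_ge0 : 0 <= Lam mu1 i by rewrite mulr_ge0 // subr_ge0.
exact: mulr_ge0 (mulr_ge0 (mulr_ge0 (sqr_ge0 _) (ltW pi1_gt0)) pi2_ge0) Lam_ge0.
Qed.

Lemma em_weight_gt0 i : mustar i != 0 -> lam i = 0 -> 0 < em_weight i.
Proof.
move=> mustar_neq0 li0.
have m12 : m1 i != m2 i.
  by apply: contraNneq mustar_neq0 => m12; rewrite /mustar m12 subrr mul0r.
have /andP[x_gt0 x_lt1] := xbar_in_open01 m12.
have S_gt0 : 0 < Svar i by rewrite mulr_gt0 ?subr_gt0.
have mu_xbar : mu1 i = xbar i.
  move: (lam_mulSvar (lt0r_neq0 S_gt0)); rewrite li0 mul0r => /esym/eqP.
  by rewrite mulf_eq0 subr_eq0 (negbTE m12) subr_eq0 => /eqP.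
have c_neq0 : 2 * (Svar i)^-1 * mustar i != 0.
  by rewrite mulf_neq0 // mulf_neq0 ?pnatr_eq0 // invr_eq0 lt0r_neq0.
have c2_gt0 : 0 < (2 * (Svar i)^-1 * mustar i) ^+ 2.
  by rewrite lt_def sqrf_eq0 c_neq0 sqr_ge0.
have pi2_gt0 : 0 < pi2 pi1 by rewrite subr_gt0.
have Lam_gt0 : 0 < Lam mu1 i by rewrite /Lam mu_xbar.
exact: mulr_gt0 (mulr_gt0 (mulr_gt0 c2_gt0 pi1_gt0) pi2_gt0) Lam_gt0.
Qed.

Lemma em_weight_gt0_at_zero i k : lam k != 0 -> lam i = 0 -> 0 < em_weight i.
Proof.
move=> lk_neq0 li0.
have ik : i != k by apply: contraTneq lk_neq0 => <-; rewrite li0 eqxx.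
apply: em_weight_gt0 li0.
by apply: contraNneq (standing ik) => ->; rewrite mulr0 mul0r.
Qed.

Lemma Mupd_nonneg_lam k : (forall i, 0 <= lam i) -> lam k != 0 ->
  (forall i, 0 < M i) /\ (forall i, lam i <= M i).
Proof.
move=> lam_ge0 lk_neq0.
have lk_gt0 : 0 < lam k by rewrite lt_def lk_neq0 lam_ge0.
have factor_ge0 j := (lam_factors_ge0 j).1.
split=> i; rewrite MupdE.
  exact: (em_step_gt0 pi1_gt0 pi1_lt1 lam_ge0 factor_ge0 (em_weight_ge0 i)
            (em_weight_gt0_at_zero lk_neq0) lk_gt0).
exact: (em_step_ge pi1_gt0 pi1_lt1 lam_ge0 factor_ge0 i (em_weight_ge0 i)).
Qed.

Lemma Mupd_nonpos_lam k : (forall i, lam i <= 0) -> lam k != 0 ->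
  (forall i, M i < 0) /\ (forall i, M i <= lam i).
Proof.
move=> lam_le0 lk_neq0; pose nlam j := - lam j.
have [pi2_gt0 pi2_lt1] : 0 < pi2 pi1 /\ pi2 pi1 < 1 by rewrite subr_gt0 gtrBl.
have ME i : M i = - em_step (pi2 pi1) nlam (em_weight i) i.
  by rewrite em_step_opp opprK MupdE.
have nlam_ge0 j : 0 <= nlam j by rewrite oppr_ge0.
have nfactor_ge0 j : 0 <= 1 - pi2 pi1 * nlam j.
  by rewrite mulrN opprK; case: (lam_factors_ge0 j).
have nlk_gt0 : 0 < nlam k by rewrite oppr_gt0 lt_neqAle lk_neq0 lam_le0.
have nw_gt0 i : nlam i = 0 -> 0 < em_weight i.
  by move/eqP; rewrite oppr_eq0 => /eqP /(em_weight_gt0_at_zero lk_neq0).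
split=> i; rewrite ME; [rewrite oppr_lt0 | rewrite lerNl].
  exact: (em_step_gt0 pi2_gt0 pi2_lt1 nlam_ge0 nfactor_ge0 (em_weight_ge0 i)
            (nw_gt0 i) nlk_gt0).
exact: (em_step_ge pi2_gt0 pi2_lt1 nlam_ge0 nfactor_ge0 i (em_weight_ge0 i)).
Qed.

End EMUpdate.

Theorem mainTheorem10 (R : realFieldType) (D : nat) (pi1 : R) (m1 m2 : 'I_D -> R) :
  0 < pi1 < 1 ->
  (forall i, 0 <= m1 i <= 1) ->
  (forall i, 0 <= m2 i <= 1) ->
  (forall i j : 'I_D, i != j ->
     4 * pi1 * pi2 pi1 * mustar m1 m2 i * mustar m1 m2 j != 0) ->
  forall (mu1 : 'I_D -> R), (forall i, 0 <= mu1 i <= 1) ->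
  let lam := lam_of pi1 m1 m2 mu1 in
  let M := Mupd pi1 m1 m2 mu1 lam in
  ((forall i, 0 <= lam i) -> (exists i, lam i != 0) ->
     (forall i, 0 < M i) /\ (forall i, lam i <= M i)) /\
  ((forall i, lam i <= 0) -> (exists i, lam i != 0) ->
     (forall i, M i < 0) /\ (forall i, M i <= lam i)).
Proof.
move=> /andP[pi1_gt0 pi1_lt1] m1_01 m2_01 standing mu1 mu1_01 lam M.
by split=> [lam_ge0 [k lk_neq0] | lam_le0 [k lk_neq0]];
  [apply: Mupd_nonneg_lam lk_neq0 | apply: Mupd_nonpos_lam lk_neq0].
Qed.
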